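(* Let $Y^*\in\mathcal L^1(\mathcal Q)$ and let the range $\{\mu_{\mathcal Q}(A)\mid A\in\mathcal F\}$ be relatively compact in $(l^\infty(\mathcal Q),\|\cdot\|_\infty)$. If $\rho_{\mathcal Q}(Y^*\mathbb 1_{\{Y^*>a\}})\to0$ as $a\to\infty$, then $\rho_{\mathcal Q}$ is continuous from above at $0$.
   Context: Let $(\Omega,\mathcal F,\mathrm P)$ be a probability space (equipped with a filtration $(\mathcal F_t)_{0\le t\le T}$, $\mathcal F=\mathcal F_T$). $\mathcal Q$ is a nonempty set of probability measures on $\mathcal F$, each absolutely continuous w.r.t. $\mathrm P$. $\mathcal L^1(\mathcal Q)$ is the set of random variables $X$ with $\sup_{\mathrm Q\in\mathcal Q}\mathbb E_{\mathrm Q}[|X|]<\infty$. $Y=(Y_t)_{0\le t\le T}$ is a right-continuous adapted process with bounded paths and $Y^*:=\sup_{t\in[0,T]}|Y_t|$. $\mathcal X$ is the set of random variables $X$ with $|X|\le C(Y^*+1)$ $\mathrm P$-a.s. for some $C>0$; $\rho_{\mathcal Q}(X)=\sup_{\mathrm Q\in\mathcal Q}\mathbb E_{\mathrm Q}[X]$ for $X\in\mathcal X$; $\rho_{\mathcal Q}$ is continuous from above at $0$ if $\rho_{\mathcal Q}(X_n)\searrow0$ whenever $X_n\in\mathcal X$, $X_n\searrow0$ $\mathrm P$-a.s. $l^\infty(\mathcal Q)$ is the space of bounded real functions on $\mathcal Q$ with sup-norm, and $\mu_{\mathcal Q}(A)(\mathrm Q)=\mathrm Q(A)$ for $A\in\mathcal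 F$. *)

From HB Require Import structures.
From mathcomp Require Import all_boot all_order all_algebra.
From mathcomp Require Import all_classical all_reals all_analysis.
Set Implicit Arguments. Unset Strict Implicit. Unset Printing Implicit Defensive.
Import Order.TTheory GRing.Theory Num.Theory.
Import numFieldNormedType.Exports.
Local Open Scope classical_set_scope.
Local Open Scope ring_scope.

Section defs.
Context d (T : measurableType d) (R : realType).

Definition Ystar (Y : R -> T -> R) (Tend : R) (w : T) : R :=
  sup [set `|Y t w| | t in `[0, Tend]].

Definition in_L1Q (Q : set (probability T R)) (X : T -> R) : Prop :=
  (ereal_sup [set (\int[Qm]_w (`|X w|)%:E)%E | Qm in Q] < +oo)%E.

Definition in_Xspace (P : probability T R) (Ys : T -> R) (X : T -> R) : Prop :=
  measurable_fun setT X /\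
  exists C : R, 0 < C /\ {ae P, forall w, `|X w| <= C * (Ys w + 1)}.

Definition rhoQ (Q : set (probability T R)) (X : T -> R) : \bar R :=
  ereal_sup [set (\int[Qm]_w (X w)%:E)%E | Qm in Q].

Definition rhoQ_cont_from_above_at0 (P : probability T R)
    (Q : set (probability T R)) (Ys : T -> R) : Prop :=
  forall Xn : nat -> T -> R,
    (forall n, in_Xspace P Ys (Xn n)) ->
    {ae P, forall w, (forall n, Xn n.+1 w <= Xn n w) /\ (Xn ^~ w @ \oo --> 0)} ->
    (forall n, (rhoQ Q (Xn n.+1) <= rhoQ Q (Xn n))%E) /\
    (rhoQ Q \o Xn @ \oo --> 0%E).

Definition muQ (A : set T) : probability T R -> R := fun Qm => fine (Qm A).

End defs.

(* After changing the X_n on a P-null set (which changes no Q-integral,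
   as every Q is absolutely continuous w.r.t. P), they decrease to 0 everywhere and
   satisfy X_n <= C (Y^* + 1).  For a >= 0 and M = C (a + 1) one has pointwise
   X_n <= e + M 1_{X_n > e} + C Y^* 1_{Y^* > a}, hence
   E_Q[X_n] <= e + M Q(X_n > e) + C rho_Q(Y^* 1_{Y^* > a}),
   and the last term is small for a large.  The sets {X_n > e} decrease to the empty
   set, so Q(X_n > e) decreases to 0 for every Q; since the range of mu_Q is
   relatively compact in l^oo(Q), this monotone convergence is uniform in Q (Dini):
   a cluster point of the sequence mu_Q({X_n > e}) vanishes on Q, some term is
   uniformly close to it, and all later terms are smaller. *)

From HB Require Import structures.
From mathcomp Require Import all_boot all_order all_algebra.
From mathcomp Require Import all_classical all_reals all_analysis.
From mathcomp Require Import measurable_realfun lra.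
Set Implicit Arguments.
Unset Strict Implicit.
Unset Printing Implicit Defensive.
Import Order.TTheory GRing.Theory Num.Theory.
Import numFieldNormedType.Exports.
Local Open Scope classical_set_scope.
Local Open Scope ring_scope.

Lemma nonincreasing_cvg0_ge0 (R : realType) (u : nat -> R) :
  (forall n, u n.+1 <= u n) -> u @ \oo --> 0 -> forall n, 0 <= u n.
Proof.
move=> u_dec u_cvg n.
have := nonincreasing_cvgn_ge ((nonincreasing_seqP _).1 u_dec) (cvgP _ u_cvg) n.
by rewrite (cvg_lim _ u_cvg).
Qed.

Lemma ge0_cvge0P (U : Type) (F : set_system U) (FF : Filter F) (R : realType)
    (f : U -> \bar R) : (forall x, 0 <= f x)%E ->
  f @ F --> 0%E <-> forall e, 0 < e -> \forall x \near F, (f x <= e%:E)%E.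
Proof.
move=> f0; split => [/fine_cvgP[f_fin /cvgrPdist_le f_cvg] e e0|f_le].
  apply: filterS2 f_fin (f_cvg e e0) => x /fineK <-.
  by rewrite sub0r normrN lee_fin => /(le_trans (ler_norm _)).
have f_fin : \forall x \near F, f x \is a fin_num.
  apply: filterS (f_le 1 ltr01) => x fx1.
  by rewrite ge0_fin_numE ?f0 // (le_lt_trans fx1) ?ltry.
apply/fine_cvgP; split => //; apply/cvgrPdist_le => e e0.
apply: filterS2 f_fin (f_le e e0) => x fx_fin fxe /=.
by rewrite sub0r normrN ger0_norm ?fine_ge0 ?f0 // -lee_fin fineK.
Qed.

Section uniform_dini.
Variables (U : choiceType) (R : realType) (A : set U).

Lemma uniform_nbhs_ball (g : {uniform` A -> R}) (r : R) : 0 < r ->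
  nbhs g [set h : {uniform` A -> R} | forall x, A x -> `|g x - h x| < r].
Proof.
move=> r0; apply/uniform_nbhs; exists [set xy : R * R | ball xy.1 r xy.2].
by split; [rewrite -entourage_ballE; exists r|move=> h /= hb x /hb].
Qed.

Lemma compact_nonincreasing_uniform_cvg0 (K : set {uniform` A -> R})
    (f : nat -> {uniform` A -> R}) :
  compact K -> (forall n, K (f n)) ->
  (forall x, A x -> forall n, f n.+1 x <= f n x) ->
  (forall x, A x -> f ^~ x @ \oo --> 0) ->
  forall e, 0 < e -> \forall n \near \oo, forall x, A x -> f n x <= e.
Proof.
move=> cK Kf f_dec f_cvg e e0.
have fK : (f @ \oo) K by apply: (@filterE _ \oo).
have [g [_ g_clus]] := cK (f @ \oo) (fmap_proper_filter f _) fK.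
have g0 x : A x -> g x = 0.
  move=> Ax; apply/eqP/negPn/negP => gx0.
  have r0 : 0 < `|g x| / 2 by rewrite divr_gt0 ?normr_gt0.
  have near_f0 : (f @ \oo) [set h : {uniform` A -> R} | `|h x| < `|g x| / 2].
    have /cvgrPdist_lt/(_ _ r0) := f_cvg x Ax.
    by apply: filterS => n /=; rewrite sub0r normrN.
  have [h [/= hx0 /(_ x Ax) hgx]] := g_clus _ _ near_f0 (uniform_nbhs_ball g r0).
  have := ler_distD (h x) (g x) 0; rewrite !subr0.
  by move=> /le_lt_trans/(_ (ltrD hgx hx0)); rewrite -splitr ltxx.
have f_range : (f @ \oo) (range f) by apply: (@filterE _ \oo) => n; exists n.
have [_ [[N _ <-] /= fN]] := g_clus _ _ f_range (uniform_nbhs_ball g e0).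
near=> n => x Ax.
have f_noninc : nonincreasing_seq (f ^~ x) by apply/nonincreasing_seqP/f_dec.
apply: le_trans (f_noninc N n _) _; first by near: n; exists N.
by have := fN x Ax; rewrite g0 // sub0r normrN => /ltW/(le_trans (ler_norm _)).
Unshelve. all: by end_near.
Qed.

End uniform_dini.

Lemma muQ_uniform_cvg0 d (T : measurableType d) (R : realType)
    (Q : set (probability T R)) (A : nat -> set T) :
  compact (closure ([set muQ B | B in measurable] : set {uniform` Q -> R})) ->
  (forall n, measurable (A n)) -> (forall n, A n.+1 `<=` A n) ->
  \bigcap_n A n = set0 ->
  forall e, 0 < e -> \forall n \near \oo, forall Qm, Q Qm -> (Qm (A n) <= e%:E)%E.
Proof.
move=> cpt mA decA capA e e0.
have A_noninc : nonincreasing_seq A by apply/nonincreasing_seqP => n; apply/subsetPset/decA.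
have QmA_fin (Qm : probability T R) n : Qm (A n) \is a fin_num.
  exact: fin_num_measure.
have muQ_cvg0 (Qm : probability T R) : (fun n => muQ (A n) Qm) @ \oo --> 0.
  have QmA0 : (Qm (A 0%N) < +oo)%E by rewrite ltey_eq (QmA_fin Qm 0%N).
  have := nonincreasing_cvg_mu QmA0 mA (bigcapT_measurable mA) A_noninc.
  by rewrite capA measure0 => /fine_cvgP[].
have muQ_noninc (Qm : probability T R) n : muQ (A n.+1) Qm <= muQ (A n) Qm.
  apply: fine_le; [exact: QmA_fin|exact: QmA_fin|].
  by apply: le_measure; rewrite ?inE //; apply: decA.
have muQ_cl n : closure ([set muQ B | B in measurable] : set {uniform` Q -> R})
    (muQ (A n)).
  by apply: subset_closure; exists (A n).
have := compact_nonincreasing_uniform_cvg0 cpt muQ_cl (fun Qm _ => muQ_noninc Qm)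
  (fun Qm _ => muQ_cvg0 Qm) e0.
by apply: filterS => n muQ_le Qm /muQ_le; rewrite -lee_fin fineK ?QmA_fin.
Qed.

Section integral_bounds.
Context d (T : measurableType d) (R : realType).
Implicit Types (X Z : T -> R) (w : T).

Lemma measurable_superlevel X (c : R) : measurable_fun setT X ->
  measurable [set w | c < X w].
Proof.
move=> mX; rewrite -[S in measurable S]setTI.
have -> : [set w | c < X w] = X @^-1` `]c, +oo[.
  by apply/seteqP; split => w; rewrite /preimage /= in_itv /= andbT.
exact: mX.
Qed.

Lemma le_add_indic_excess X (e M : R) w : 0 <= e ->
  X w <= e + M * \1_[set w | e < X w] w + Num.max (X w - M) 0.
Proof.
move=> e0; rewrite indicE maxEge; have [eX|Xe] := ltrP e (X w).
  by rewrite mem_set // mulr1; case: (leP 0 (X w - M)); lra.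
rewrite memNset ?mulr0 /=; last by apply/negP; rewrite -leNgt.
by case: (leP 0 (X w - M)); lra.
Qed.

Lemma excess_le_tail X Z (C a : R) w :
  0 <= C -> 0 <= a -> X w <= C * (Z w + 1) ->
  Num.max (X w - C * (a + 1)) 0 <= C * (Z w * \1_[set w | a < Z w] w).
Proof.
move=> C0 a0 XC; rewrite indicE maxEge; have [aZ|Za] := ltrP a (Z w).
  by rewrite mem_set // mulr1; case: (leP 0 (X w - C * (a + 1))); nra.
rewrite memNset ?mulr0 /=; last by apply/negP; rewrite -leNgt.
by case: (leP 0 (X w - C * (a + 1))); nra.
Qed.

Local Open Scope ereal_scope.

(* [g] need not be measurable: for a nonnegative integrand the integral is the
   supremum over the simple functions below it, hence monotone. *)
Lemma ge0_le_integral_scale (mu : {measure set T -> \bar R}) (f g : T -> R) (c : R) :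
  (0 < c)%R -> measurable_fun setT f -> (forall x, 0 <= f x)%R ->
  (forall x, f x <= c * g x)%R ->
  \int[mu]_x (f x)%:E <= c%:E * \int[mu]_x (g x)%:E.
Proof.
move=> c0 mf f0 fg.
have cf0 x : 0 <= (c^-1 * f x)%:E by rewrite lee_fin mulr_ge0 ?f0 // invr_ge0 ltW.
have -> : \int[mu]_x (f x)%:E = c%:E * \int[mu]_x (c^-1 * f x)%:E.
  rewrite -ge0_integralZl_EFin ?invr_ge0 ?(ltW c0) //; last first.
    by apply/measurable_EFinP; apply: measurable_funM => //; exact: measurable_cst.
  by apply: eq_integral => x _; rewrite -EFinM mulrA divff ?gt_eqF ?mul1r.
have cfg x : (c^-1 * f x)%:E <= (g x)%:E by rewrite lee_fin ler_pdivrMl.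
rewrite lee_pmul2l ?lte_fin // !ge0_integralTE //; last first.
  by move=> x; apply: le_trans (cf0 x) (cfg x).
apply: ereal_sup_le => _ [h hf <-]; exists h => // x.
exact: le_trans (hf x) (cfg x).
Qed.

Lemma integral_le_truncation (mu : probability T R) X Z (C a e : R) :
  measurable_fun setT X -> (forall w, 0 <= X w)%R ->
  (forall w, X w <= C * (Z w + 1))%R -> (0 < C)%R -> (0 <= a)%R -> (0 <= e)%R ->
  \int[mu]_w (X w)%:E <= e%:E + (C * (a + 1))%:E * mu [set w | e < X w]%R
                         + C%:E * \int[mu]_w (Z w * \1_[set w | a < Z w]%R w)%:E.
Proof.
move=> mX X0 XC C0 a0 e0; set M := (C * (a + 1))%R; set E := [set w | e < X w]%R.
have M0 : (0 <= M)%R by rewrite mulr_ge0 ?ltW //; lra.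
have mE : measurable E := measurable_superlevel e mX.
pose h w := Num.max (X w - M)%R 0%R.
have mh : measurable_fun setT h.
  by apply: measurable_maxr; [apply: measurable_funB|exact: measurable_cst].
have h0 w : (0 <= h w)%R by rewrite /h le_max lexx orbT.
have mMind : measurable_fun setT (fun w => M * \1_E w)%R.
  by apply: measurable_funM; [exact: measurable_cst|exact: measurable_indic].
have Mind0 w : (0 <= M * \1_E w)%R by rewrite indicE mulr_ge0 ?ler0n.
apply: le_trans (_ : _ <= \int[mu]_w (e%:E + (M * \1_E w)%:E + (h w)%:E)) _.
  apply: ge0_le_integral => //.
  - by move=> w _; rewrite lee_fin.
  - exact/measurable_EFinP.
  - by apply/measurable_EFinP; apply: measurable_funD => //; apply: measurable_funD.
  - by move=> w _; rewrite -!EFinD lee_fin le_add_indic_excess.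
rewrite ge0_integralD //; last 4 first.
- by move=> w _; rewrite -EFinD lee_fin addr_ge0.
- by apply/measurable_EFinP; apply: measurable_funD => //; exact: measurable_cst.
- by move=> w _; rewrite lee_fin.
- exact/measurable_EFinP.
apply: leeD; last first.
  apply: (@ge0_le_integral_scale mu h (fun w => Z w * \1_[set w | a < Z w]%R w)%R) => // w.
  exact: excess_le_tail (ltW C0) a0 (XC w).
rewrite ge0_integralD //; last 2 first.
- by move=> w _; rewrite lee_fin.
- exact/measurable_EFinP.
rewrite integral_cst //= probability_setT mule1 leeD2l //.
under eq_integral do rewrite EFinM.
rewrite ge0_integralZl_EFin //; last exact/measurable_EFinP/measurable_indic.
by rewrite integral_indic // setIT.
Qed.

End integral_bounds.

Lemma nonincreasing_integrals_uniform_cvg0 d (T : measurableType d) (R : realType)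
    (Q : set (probability T R)) (Z : T -> R) (X : nat -> T -> R) (C : R) :
  compact (closure ([set muQ B | B in measurable] : set {uniform` Q -> R})) ->
  (forall e, 0 < e -> exists2 a, 0 <= a & forall Qm, Q Qm ->
     (\int[Qm]_w (Z w * \1_[set w | a < Z w] w)%:E <= e%:E)%E) ->
  0 < C -> (forall n, measurable_fun setT (X n)) ->
  (forall w n, X n.+1 w <= X n w) -> (forall w, X ^~ w @ \oo --> 0) ->
  (forall w, X 0%N w <= C * (Z w + 1)) ->
  forall e, 0 < e -> \forall n \near \oo, forall Qm, Q Qm ->
    (\int[Qm]_w (X n w)%:E <= e%:E)%E.
Proof.
move=> cpt Z_tail C0 mX X_dec X_cvg X0C e e0.
have X_noninc w : nonincreasing_seq (X ^~ w) by apply/nonincreasing_seqP.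
have X_ge0 w := nonincreasing_cvg0_ge0 (X_dec w) (X_cvg w).
have XC w n : X n w <= C * (Z w + 1) := le_trans (X_noninc w _ _ (leq0n n)) (X0C w).
have e3 : 0 < e / 3 by rewrite divr_gt0.
have [a a0 tail_a] := Z_tail (e / 3 / C) (divr_gt0 e3 C0).
have M0 : 0 < C * (a + 1) by rewrite mulr_gt0 //; lra.
pose A n := [set w | e / 3 < X n w].
have mA n : measurable (A n) := measurable_superlevel _ (mX n).
have A_dec n : A n.+1 `<=` A n by move=> w /lt_le_trans; apply.
have A_cap : \bigcap_n A n = set0.
  apply/seteqP; split => // w /= Aw.
  have /cvgrPdist_lt/(_ _ e3)/filter_ex[n] := X_cvg w.
  by rewrite sub0r normrN => /(le_lt_trans (ler_norm _))/(lt_trans (Aw n I)); rewrite ltxx.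
have := muQ_uniform_cvg0 cpt mA A_dec A_cap (divr_gt0 e3 M0).
apply: filterS => n QmA Qm QQm.
have := integral_le_truncation Qm (mX n) (X_ge0^~ n) (XC^~ n) C0 a0 (ltW e3).
move/le_trans; apply.
have ge0E (x : R) : 0 < x -> (0 <= x%:E)%E by rewrite lee_fin => /ltW.
have := leeD (leeD (lexx (e / 3)%:E) (lee_wpmul2l (ge0E _ M0) (QmA Qm QQm)))
  (lee_wpmul2l (ge0E _ C0) (tail_a Qm QQm)).
move/le_trans; apply.
rewrite -!EFinM -!EFinD lee_fin [_ * (_ / (C * _))]mulrC [C * (_ / C)]mulrC.
by rewrite !divfK ?gt_eqF //; lra.
Qed.

Section rhoQ.
Context d (T : measurableType d) (R : realType) (Q : set (probability T R)).
Implicit Types f g : T -> R.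
Local Open Scope ereal_scope.

Lemma integral_le_rhoQ f Qm : Q Qm -> \int[Qm]_w (f w)%:E <= rhoQ Q f.
Proof. by move=> QQm; apply: ereal_sup_ubound; exists Qm. Qed.

Lemma rhoQ_le f c : (forall Qm, Q Qm -> \int[Qm]_w (f w)%:E <= c) -> rhoQ Q f <= c.
Proof. by move=> f_le; apply: ge_ereal_sup => _ [Qm QQm <-]; exact: f_le. Qed.

Lemma rhoQ_ge0 f : Q !=set0 -> (forall w, 0 <= f w)%R -> 0 <= rhoQ Q f.
Proof.
move=> [Qm QQm] f0; apply: le_trans (integral_le_rhoQ f QQm).
by apply: integral_ge0 => w _; rewrite lee_fin.
Qed.

Lemma eq_rhoQ f g : (forall Qm, Q Qm -> \int[Qm]_w (f w)%:E = \int[Qm]_w (g w)%:E) ->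
  rhoQ Q f = rhoQ Q g.
Proof.
move=> fg; rewrite /rhoQ; congr ereal_sup; apply/seteqP; split => _ [Qm QQm <-];
  by exists Qm => //; rewrite fg.
Qed.

Lemma le_rhoQ f g : measurable_fun setT f -> measurable_fun setT g ->
  (forall w, 0 <= f w)%R -> (forall w, f w <= g w)%R -> rhoQ Q f <= rhoQ Q g.
Proof.
move=> mf mg f0 fg; apply: rhoQ_le => Qm QQm; apply: le_trans (integral_le_rhoQ g QQm).
apply: ge0_le_integral => //.
- by move=> w _; rewrite lee_fin.
- exact/measurable_EFinP.
- exact/measurable_EFinP.
- by move=> w _; rewrite lee_fin.
Qed.

Lemma rhoQ_tail_uniform Z : Q !=set0 -> (forall w, 0 <= Z w)%R ->
  rhoQ Q (fun w => Z w * \1_[set w' | Z w' > a] w)%R @[a --> +oo%R] --> 0 ->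
  forall e, (0 < e)%R -> exists2 a, (0 <= a)%R & forall Qm, Q Qm ->
    \int[Qm]_w (Z w * \1_[set w | a < Z w] w)%:E <= e%:E.
Proof.
move=> Qne Z0 tail e e0.
have rho_ge0 (a : R) : 0 <= rhoQ Q (fun w => Z w * \1_[set w | a < Z w] w)%R.
  by apply: rhoQ_ge0 => // w; rewrite indicE mulr_ge0 ?ler0n.
have [a [a0 tail_a]] := filter_ex (filterI (nbhs_pinfty_ge (num_real 0))
  ((ge0_cvge0P _ rho_ge0).1 tail e e0)).
by exists a => // Qm QQm; apply: le_trans (integral_le_rhoQ _ QQm) tail_a.
Qed.

Lemma eq_rhoQ_ae (P : probability T R) f g : (forall Qm, Q Qm -> Qm `<< P) ->
  measurable_fun setT f -> measurable_fun setT g -> ae_eq P setT f g ->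
  rhoQ Q f = rhoQ Q g.
Proof.
move=> QP mf mg fg; apply: eq_rhoQ => Qm QQm.
apply: ae_eq_integral => //; [exact/measurable_EFinP|exact/measurable_EFinP|].
have := null_dominates_ae_eq measurableT (QP _ QQm) fg.
by apply: filterS => w fgw /fgw ->.
Qed.

End rhoQ.

Lemma ae_nonincreasing_modification d (T : measurableType d) (R : realType)
    (P : probability T R) (Z : T -> R) (C : R) (X : nat -> T -> R) :
  0 <= C -> (forall w, 0 <= Z w) -> (forall n, measurable_fun setT (X n)) ->
  {ae P, forall w, (forall n, X n.+1 w <= X n w) /\ (X ^~ w @ \oo --> 0)} ->
  {ae P, forall w, `|X 0%N w| <= C * (Z w + 1)} ->
  exists Xc : nat -> T -> R, [/\ forall n, measurable_fun setT (Xc n),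
    forall n, ae_eq P setT (X n) (Xc n),
    forall w n, Xc n.+1 w <= Xc n w, forall w, Xc ^~ w @ \oo --> 0
    & forall w, Xc 0%N w <= C * (Z w + 1)].
Proof.
move=> C0 Z0 mX X_ae X0_ae; have [N [mN PN0 N_bad]] := filterI X_ae X0_ae.
have goodN w : ~ N w -> ((forall n, X n.+1 w <= X n w) /\ (X ^~ w @ \oo --> 0))
    /\ `|X 0%N w| <= C * (Z w + 1).
  by move=> Nw; apply: contrapT => bad; exact/Nw/N_bad.
pose Xc n w := X n w * \1_(~` N) w.
have Xc0 w n : N w -> Xc n w = 0 by move=> Nw; rewrite /Xc indicE memNset ?mulr0.
have XcE w n : ~ N w -> Xc n w = X n w by move=> Nw; rewrite /Xc indicE mem_set ?mulr1.
exists Xc; split.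
- by move=> n; apply: measurable_funM => //; exact/measurable_indic/measurableC.
- move=> n; exists N; split => // w /= Xw.
  by apply: contrapT => Nw; apply: Xw => _; rewrite XcE.
- move=> w n; have [Nw|/[dup]/goodN[[X_dec _] _] Nw] := pselect (N w).
    by rewrite !Xc0.
  by rewrite !XcE.
- move=> w; have [Nw|/[dup]/goodN[[_ X_cvg] _] Nw] := pselect (N w).
    by rewrite (_ : Xc ^~ w = fun=> 0); [exact: cvg_cst|apply: funext => n; rewrite Xc0].
  by rewrite (_ : Xc ^~ w = X ^~ w) //; apply: funext => n; rewrite XcE.
- move=> w; have [Nw|/[dup]/goodN[_ X0C] Nw] := pselect (N w).
    by rewrite Xc0 // mulr_ge0 // addr_ge0.
  by rewrite XcE // (le_trans (ler_norm _)).
Qed.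

Lemma Ystar_ge0 d (T : measurableType d) (R : realType) (Y : R -> T -> R) (Tend : R) w :
  0 <= Tend -> (exists M, forall t, t \in `[0, Tend] -> `|Y t w| <= M) ->
  0 <= Ystar Y Tend w.
Proof.
move=> T0 [M YM]; apply: le_trans (normr_ge0 (Y 0 w)) _.
apply: ub_le_sup; last by exists 0 => //; rewrite /= in_itv /= lexx.
by exists M => _ [t tI <-]; apply: YM; rewrite inE.
Qed.

Theorem lemma6p8 (d : measure_display) (T : measurableType d) (R : realType)
  (P : probability T R) (Q : set (probability T R))
  (Tend : R) (Y : R -> T -> R) :
  0 < Tend ->
  Q !=set0 ->
  (forall Qm, Q Qm -> Qm `<< P) ->
  (forall t, measurable_fun setT (Y t)) ->
  (forall w t, t \in `[0, Tend[ -> Y ^~ w @ t^'+ --> Y t w) ->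
  (forall w, exists M : R, forall t, t \in `[0, Tend] -> `|Y t w| <= M) ->
  in_L1Q Q (Ystar Y Tend) ->
  compact (closure ([set muQ A | A in measurable] : set {uniform` Q -> R})) ->
  (rhoQ Q (fun w => Ystar Y Tend w * \1_[set w' | Ystar Y Tend w' > a] w)
     @[a --> +oo] --> 0%E) ->
  rhoQ_cont_from_above_at0 P Q (Ystar Y Tend).
Proof.
move=> T0 Qne QP _ _ Ybd _ cpt tail Xn X_in X_ae.
set Ys := Ystar Y Tend.
have Ys0 w : 0 <= Ys w := Ystar_ge0 (ltW T0) (Ybd w).
have Ys_tail := rhoQ_tail_uniform Qne Ys0 tail.
have [_ [C [C0 X0_ae]]] := X_in 0%N.
have [Xc [mXc XXc Xc_dec Xc_cvg Xc0C]] :=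
  ae_nonincreasing_modification (ltW C0) Ys0 (fun n => (X_in n).1) X_ae X0_ae.
have rhoXc n : rhoQ Q (Xn n) = rhoQ Q (Xc n).
  exact: eq_rhoQ_ae QP (X_in n).1 (mXc n) (XXc n).
have Xc_ge0 w := nonincreasing_cvg0_ge0 (Xc_dec w) (Xc_cvg w).
split => [n|]; first by rewrite !rhoXc; apply: le_rhoQ.
have -> : rhoQ Q \o Xn = rhoQ Q \o Xc by apply: funext => n; rewrite /= rhoXc.
apply/ge0_cvge0P => [n|e e0]; first exact: rhoQ_ge0.
have := nonincreasing_integrals_uniform_cvg0 cpt Ys_tail C0 mXc Xc_dec Xc_cvg Xc0C e0.
by apply: filterS => n Xc_small; apply: rhoQ_le.
Qed.
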